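(* In the transactional panorama model with the lenses and metrics described in the context, for every lens $A$ among LCNB, LCMB, ICNB, $k$-GCNB, $k$-LCNB, $k$-LCMB we have $S(\mathrm{GCPB}) \le S(A) \le S(\mathrm{GCNB})$ and $I(\mathrm{GCPB}) \ge I(A) \ge I(\mathrm{GCNB})$.
   Context: A view graph is a DAG on a set $N$ of nodes (source data and views). Write transactions are processed one at a time; write transaction $w^{t_i}$ creates version $G^{t_i}$ with state set $V^{t_i}$ containing, for each node $n_k$, either its computed new result $v_k^{t_i}$, a placeholder $UC_k^{t_i}$ if $w^{t_i}$ updates $n_k$ but has not yet computed it, or its result from the previous version if $n_k$ is not updated. A version is committed once all its new results are computed; at any time there is the committed graph (most recently committed version, no UCs) and the latest graph (version of the most recent write transaction). Read transactions $r^{s_1},\dots,r^{s_m}$ each read the views in the current viewport and return immediately a set $H^{s_i}$ of states (results or UCs); $Time(r^{s_i})$ is its return time. A returned state's timestamp is that of its version. Lenses (rules for answering reads): GCPB returns the viewport states from the latest graph. GCNB returns them from the committed graph. LCNB returns them from the more recent of the committed and latest graphs that has zero UCs for the viewport. LCMB: if reading either the committed or the latest graph preserves monotonicity (no view gets a state with smaller timestamp than previously read), behave like LCNB; otherwise read the latest graph. ICNB returns, for each view independently, its most recently computed result. $k$-GCNB reads the latest graph if it has at most $k$ UCs in total, otherwise the committed graph. $k$-LCNB reads the more recent of the committed and latest graphs having at most $k$ UCs for the viewport. $k$-LCMB: if reading either graph preserves monotonicity, behave like $k$-LCNB; otherwise read the latest graph. Metrics for $R=\{r^{s_1},\dots,r^{s_m}\}$: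 invisibility $I(R)=\sum_{i=1}^{m-1}|H^{s_i}_{UC}|\,(Time(r^{s_{i+1}})-Time(r^{s_i}))$ where $H^{s_i}_{UC}$ is the set of UCs in $H^{s_i}$; staleness $S(R)=\sum_{i=1}^{m-1}\sum_{v_k^{t_j}\in H^{s_i}_{qr}}\mathbf{1}[v_k^{t_j}\notin V^{t_i}]\,(Time(r^{s_{i+1}})-Time(r^{s_i}))$ where $H^{s_i}_{qr}$ is the set of view results (non-UC states) in $H^{s_i}$ and $G^{t_i}$ is the latest version before $r^{s_i}$ starts. $S(A)$, $I(A)$ denote these metrics under lens $A$, where all lenses are compared on the same write transactions, the same order of computing new view results, and the same sequence of read transactions. *)

From HB Require Import structures.
From mathcomp Require Import all_boot all_order all_algebra.
Set Implicit Arguments. Unset Strict Implicit. Unset Printing Implicit Defensive.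
Import Order.TTheory GRing.Theory Num.Theory.
Local Open Scope ring_scope.

(* A scenario: nodes N of the view graph; write transactions w^{t_1..t_nw}
   (version 0 = the initial, fully computed graph); upd i = nodes updated by
   w^{t_i}; create i = time at which version G^{t_i} is created;
   comp i k = time at which the new result v_k^{t_i} is computed (k \in upd i);
   read transactions r^{s_0..s_(nr-1)} with return times rtime and viewports vp. *)
Record scenario (R : realFieldType) (N : finType) := Scenario {
  nw : nat;
  upd : nat -> {set N};
  create : nat -> R;
  comp : nat -> N -> R;
  nr : nat;
  rtime : nat -> R;
  vp : nat -> {set N} }.

(* A state: a result v_k^{t_j} (Res j) or a placeholder UC_k^{t_j} (UC j);
   the node k is given by the position. *)
Inductive state := Res of nat | UC of nat.

Definition is_uc (s : state) : bool := if s is UC _ then true else false.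

Definition same_state (s1 s2 : state) : bool :=
  match s1, s2 with
  | Res a, Res b => (a == b)%N
  | UC a, UC b => (a == b)%N
  | _, _ => false
  end.

Inductive lens :=
  | GCPB | GCNB | LCNB | LCMB | ICNB
  | kGCNB of nat | kLCNB of nat | kLCMB of nat.

Section Panorama.
Variables (R : realFieldType) (N : finType) (sc : scenario R N).

(* Well-formedness: results are computed after their version is created;
   write transactions are processed one at a time (version i commits before
   version i+1 is created); reads are in time order. *)
Definition wf : Prop :=
  [/\ (forall i, (1 <= i <= nw sc)%N -> forall k, k \in upd sc i ->
          create sc i <= comp sc i k),
      (forall i, (1 <= i < nw sc)%N -> forall k, k \in upd sc i ->
          comp sc i k <= create sc i.+1),
      (forall i, (1 <= i < nw sc)%N -> create sc i <= create sc i.+1) &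
      (forall i, (i.+1 < nr sc)%N -> rtime sc i <= rtime sc i.+1)].

(* the version whose state for node k is carried into version i *)
Fixpoint orig (i : nat) (k : N) : nat :=
  match i with
  | 0 => 0%N
  | i'.+1 => if k \in upd sc i'.+1 then i'.+1 else orig i' k
  end.

Definition stateAt (i : nat) (k : N) (t : R) : state :=
  let j := orig i k in
  if (j == 0)%N || (comp sc j k <= t) then Res j else UC j.

Definition latest (t : R) : nat :=
  count (fun i => create sc i <= t) (iota 1 (nw sc)).

Definition all_computed (j : nat) (t : R) : bool :=
  [forall k, (k \in upd sc j) ==> (comp sc j k <= t)].

Definition committed (t : R) : nat :=
  (\max_(j < (latest t).+1 | (nat_of_ord j == 0)%N || all_computed j t) j)%N.

Definition nUCvp (i v : nat) (t : R) : nat :=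
  #|[set k in vp sc i | is_uc (stateAt v k t)]|.
Definition nUCall (v : nat) (t : R) : nat :=
  #|[set k | is_uc (stateAt v k t)]|.

(* reading version v at read i preserves monotonicity w.r.t. the versions
   (timestamps) hist read by the previous reads *)
Definition mono (hist : seq nat) (i v : nat) : bool :=
  [forall k in vp sc i,
     all (fun p => (k \in vp sc p) ==> (nth 0%N hist p <= v)%N)
         (iota 0 (size hist))].

Definition choose (A : lens) (i : nat) (hist : seq nat) : nat :=
  let t := rtime sc i in
  let L := latest t in
  let C := committed t in
  let lcnb := if (nUCvp i L t == 0)%N then L else C in
  let klcnb k := if (nUCvp i L t <= k)%N then L else C in
  match A with
  | GCPB => L
  | GCNB => C
  | LCNB => lcnb
  | LCMB => if mono hist i C && mono hist i L then lcnb else L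
  | ICNB => L (* unused *)
  | kGCNB k => if (nUCall L t <= k)%N then L else C
  | kLCNB k => klcnb k
  | kLCMB k => if mono hist i C && mono hist i L then klcnb k else L
  end.

Fixpoint choices (A : lens) (i : nat) : seq nat :=
  match i with
  | 0 => [::]
  | i'.+1 => rcons (choices A i') (choose A i' (choices A i'))
  end.

Definition chosen (A : lens) (i : nat) : nat := choose A i (choices A i).

Definition icnb_ver (k : N) (t : R) : nat :=
  (\max_(j < (latest t).+1 |
     (nat_of_ord j == 0)%N || ((k \in upd sc j) && (comp sc j k <= t)%R)) j)%N.

Definition answer (A : lens) (i : nat) (k : N) : state :=
  let t := rtime sc i in
  if A is ICNB then Res (icnb_ver k t) else stateAt (chosen A i) k t.

Definition is_stale (i : nat) (k : N) (s : state) : bool :=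
  match s with
  | Res j => ~~ same_state (stateAt (latest (rtime sc i)) k (rtime sc i)) (Res j)
  | UC _ => false
  end.

Definition invisibility (A : lens) : R :=
  \sum_(0 <= i < (nr sc).-1)
     (#|[set k in vp sc i | is_uc (answer A i k)]|%:R
        * (rtime sc i.+1 - rtime sc i)).

Definition staleness (A : lens) : R :=
  \sum_(0 <= i < (nr sc).-1)
     (#|[set k in vp sc i | is_stale i k (answer A i k)]|%:R
        * (rtime sc i.+1 - rtime sc i)).

End Panorama.

(* Every lens answers a read, node by node, either from the latest graph, from
   the committed graph, or (ICNB) with the most recently computed result.  The
   latest graph never holds a stale result, and the committed graph never holds
   a UC: a version's result is computed before the next version is created.
   Hence per read and node, a UC returned by any lens is also returned by GCPB,
   and a stale result returned by any lens is also returned stale by GCNB;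
   ICNB agrees with GCPB whenever the latest state is a result, and otherwise
   is as stale as GCNB.  Summing these counts with the nonnegative weights
   Time(r^{s_{i+1}}) - Time(r^{s_i}) gives both chains of inequalities. *)
From Pilot Require Import Defs.
From HB Require Import structures.
From mathcomp Require Import all_boot all_order all_algebra.
Import Order.TTheory GRing.Theory Num.Theory.
Local Open Scope ring_scope.

Section Panorama.
Variables (R : realFieldType) (N : finType) (sc : scenario R N).
Hypothesis sc_wf : wf sc.

Lemma latest_le_nw t : (latest sc t <= nw sc)%N.
Proof. by rewrite /latest (leq_trans (count_size _ _)) ?size_iota. Qed.

Lemma create_le m i : (1 <= m <= i)%N -> (i <= nw sc)%N ->
  create sc m <= create sc i.
Proof.
case: sc_wf => _ _ create_step _ /andP[m_gt0 le_mi] i_le.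
elim: i le_mi i_le => [|i IHi]; first by rewrite leqn0 => /eqP ->.
rewrite leq_eqVlt => /orP[/eqP -> // | /[!ltnS] le_mi lt_i].
by rewrite (le_trans (IHi le_mi (ltnW lt_i))) // create_step // (leq_trans m_gt0).
Qed.

(* [latest t] counts the versions created by time t; were m created after t,
   so would be every later version, leaving fewer than m of them. *)
Lemma create_le_latest t m : (1 <= m <= latest sc t)%N -> create sc m <= t.
Proof.
case/andP=> m_gt0 le_mL; rewrite leNgt; apply/negP => t_lt.
have le_m_nw := leq_trans le_mL (latest_le_nw t).
suff : (latest sc t <= m.-1)%N by rewrite leqNgt (leq_trans _ le_mL) ?prednK.
have le_pm_nw : (m.-1 <= nw sc)%N by rewrite (leq_trans (leq_pred m)).
rewrite /latest -(subnKC le_pm_nw) iotaD count_cat.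
rewrite (@eq_in_count _ _ pred0 (iota (1 + m.-1) _)) ?count_pred0 ?addn0.
  by rewrite (leq_trans (count_size _ _)) ?size_iota.
move=> x /[!mem_iota] /andP[le_mx lt_x] /=; apply/negbTE; rewrite -ltNge.
rewrite add1n prednK // in le_mx; rewrite -addnA subnKC // add1n ltnS in lt_x.
by rewrite (lt_le_trans t_lt) // create_le ?m_gt0 ?le_mx.
Qed.

Lemma orig_le i k : (orig sc i k <= i)%N.
Proof. by elim: i => //= i IHi; case: ifP => // _; rewrite (leq_trans IHi). Qed.

Lemma orig_upd i k : (orig sc i k == 0)%N || (k \in upd sc (orig sc i k)).
Proof. by elim: i => //= i IHi; case: ifP => k_upd; rewrite ?k_upd ?orbT. Qed.

Lemma notin_upd_after_orig i k j : (orig sc i k < j <= i)%N -> k \notin upd sc j.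
Proof.
elim: i => [|i IHi] /=; first by case: j => // ? /andP[].
case: ifP => k_upd /andP[lt_oj le_ji]; first by rewrite ltnNge le_ji in lt_oj.
move: le_ji; rewrite leq_eqVlt => /orP[/eqP -> | /[!ltnS] le_ji]; first by rewrite k_upd.
by rewrite IHi // lt_oj.
Qed.

Lemma committed_le_latest t : (committed sc t <= latest sc t)%N.
Proof. by apply/bigmax_leqP => j _; rewrite -ltnS. Qed.

Lemma committed_all_computed t :
  (committed sc t == 0)%N || all_computed sc (committed sc t) t.
Proof.
by rewrite /committed; elim/big_ind: _ => // x y; rewrite /maxn; case: ifP.
Qed.

(* A node's originating version j inside the committed version C is either C
   itself, which is fully computed, or some j < C, which committed before
   version j+1 was created, hence before time t. *)
Lemma stateAt_committed k t :
  stateAt sc (committed sc t) k t = Res (orig sc (committed sc t) k).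
Proof.
rewrite /stateAt; set C := committed sc t; set j := orig sc C k.
case: (boolP (j == 0)%N) => //= j_neq0.
have j_upd : k \in upd sc j by move: (orig_upd C k); rewrite -/j (negbTE j_neq0).
have j_gt0 : (0 < j)%N by rewrite lt0n.
have C_le_nw := leq_trans (committed_le_latest t) (latest_le_nw t).
move: (orig_le C k); rewrite -/j leq_eqVlt => /orP[/eqP jC | lt_jC].
  have := committed_all_computed t; rewrite -/C -jC (negbTE j_neq0) /=.
  by move=> /forallP /(_ k); rewrite j_upd /= => ->.
case: sc_wf => _ computed_before_next _ _.
have lt_j_nw : (j < nw sc)%N := leq_trans lt_jC C_le_nw.
have C_gt0 : (0 < C)%N := leq_trans j_gt0 (ltnW lt_jC).
rewrite (le_trans (computed_before_next j _ k j_upd)) ?j_gt0 //.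
rewrite (le_trans (@create_le j.+1 C _ C_le_nw)) ?lt_jC // create_le_latest //.
by rewrite C_gt0 committed_le_latest.
Qed.

Lemma icnb_ver_latest k t :
  let o := orig sc (latest sc t) k in
  (o == 0)%N || (Defs.comp sc o k <= t) -> icnb_ver sc k t = o.
Proof.
move=> o o_done; apply/eqP; rewrite eqn_leq; apply/andP; split.
  apply/bigmax_leqP => j /orP[/eqP -> // | /andP[j_upd _]].
  rewrite leqNgt; apply: contraL j_upd => lt_oj.
  by apply: (@notin_upd_after_orig (latest sc t)); rewrite lt_oj -ltnS ltn_ord.
have lt_oL : (o < (latest sc t).+1)%N by rewrite ltnS orig_le.
apply: (leq_bigmax_cond (Ordinal lt_oL)) => /=.
case/orP: o_done => [-> // | o_comp].
by case/orP: (orig_upd (latest sc t) k) => [-> // | ->]; rewrite o_comp orbT.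
Qed.

Lemma answer_cases A i k :
  let t := rtime sc i in
  [\/ answer sc A i k = stateAt sc (latest sc t) k t,
      answer sc A i k = stateAt sc (committed sc t) k t |
      answer sc A i k = Res (icnb_ver sc k t)].
Proof.
rewrite /answer /chosen /choose.
by case: A => [| | | | |n|n|n] /=; repeat case: ifP => _; by [constructor].
Qed.

Lemma latest_not_stale i k :
  is_stale sc i k (stateAt sc (latest sc (rtime sc i)) k (rtime sc i)) = false.
Proof. by rewrite /is_stale; case: stateAt => //= j; rewrite eqxx. Qed.

Lemma stale_GCNB A i k :
  is_stale sc i k (answer sc A i k) -> is_stale sc i k (answer sc GCNB i k).
Proof.
rewrite [answer _ GCNB _ _]/= /chosen /=.
case: (answer_cases A i k) => [-> | -> // | ->]; first by rewrite latest_not_stale.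
rewrite stateAt_committed /is_stale; set t := rtime sc i; set L := latest sc t.
have [o_done | o_pending] := boolP
  ((orig sc L k == 0)%N || (Defs.comp sc (orig sc L k) k <= t)).
  by rewrite icnb_ver_latest // /stateAt -/L o_done /= eqxx.
by rewrite /stateAt -/L (negbTE o_pending).
Qed.

Lemma uc_GCPB A i k : is_uc (answer sc A i k) -> is_uc (answer sc GCPB i k).
Proof. by case: (answer_cases A i k) => [-> // | -> | ->]; rewrite ?stateAt_committed. Qed.

Lemma GCNB_not_uc i k : is_uc (answer sc GCNB i k) = false.
Proof. by rewrite /answer /chosen /= stateAt_committed. Qed.

Lemma weighted_reads_le (P Q : nat -> N -> bool) :
  (forall i k, P i k -> Q i k) ->
  \sum_(0 <= i < (nr sc).-1) (#|[set k in vp sc i | P i k]|%:R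
                               * (rtime sc i.+1 - rtime sc i))
  <= \sum_(0 <= i < (nr sc).-1) (#|[set k in vp sc i | Q i k]|%:R
                               * (rtime sc i.+1 - rtime sc i)).
Proof.
move=> PQ; rewrite big_nat [leRHS]big_nat; apply: ler_sum => i /andP[_ lt_i].
case: sc_wf => _ _ _ rtime_le; apply: ler_wpM2r.
  by rewrite subr_ge0 rtime_le // -ltn_predRL.
rewrite ler_nat subset_leq_card //; apply/subsetP => k.
by rewrite !inE => /andP[-> /PQ].
Qed.

Lemma staleness_bounds A :
  staleness sc GCPB <= staleness sc A <= staleness sc GCNB.
Proof.
apply/andP; split; apply: weighted_reads_le => i k; last exact: stale_GCNB.
by rewrite [answer _ GCPB _ _]/= latest_not_stale.
Qed.

Lemma invisibility_bounds A :
  invisibility sc GCNB <= invisibility sc A <= invisibility sc GCPB.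
Proof.
apply/andP; split; apply: weighted_reads_le => i k; last exact: uc_GCPB.
by rewrite GCNB_not_uc.
Qed.

End Panorama.

(* The bounds hold for every lens. *)
Theorem theorem2p8 (R : realFieldType) (N : finType) (sc : scenario R N)
  (A : lens) :
  wf sc ->
  (A = LCNB \/ A = LCMB \/ A = ICNB \/
   exists k : nat, A = kGCNB k \/ A = kLCNB k \/ A = kLCMB k) ->
  (staleness sc GCPB <= staleness sc A <= staleness sc GCNB) /\
  (invisibility sc GCNB <= invisibility sc A <= invisibility sc GCPB).
Proof.
move=> sc_wf _.
by split; [exact: staleness_bounds | exact: invisibility_bounds].
Qed.
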